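(* Consider Algorithm PDS-SPP described in the context, with nonnegative $\lambda_k,\tau_k$ and positive $\beta_k,p_k$, and suppose $$\tau_1=0,\quad \beta_k\tau_k\le\beta_{k-1}(\tau_{k-1}+1),\quad \beta_{k-1}=\beta_k\lambda_k,\quad \tilde L\lambda_k\le p_{k-1}\tau_k\quad\text{for all }k\ge2.$$ Let $$A=\sum_{k=1}^N\beta_k\Big[-\langle\hat x_k,y\rangle+\langle x,y_k\rangle+\langle y_k,\hat x_k-x\rangle-\tilde f^*(y_k)+\tilde f^*(y)+\frac{p_k}{T_k}\sum_{t=1}^{T_k}V(x_{k-1},x_k^t)\Big].$$ Then for all $(x,y)\in\mathcal X\times\mathcal Y$, $$A\ge-\beta_N\langle x_{N-1}-\hat x_N,y_N-y\rangle+\frac{\beta_Np_N}{2}\|x_{N-1}-\hat x_N\|^2+\beta_N(\tau_N+1)W(y_N,y).$$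
   Context: Setting. $\mathcal X$ closed convex subset of a finite-dimensional space with norm $\|\cdot\|$ (dual $\|\cdot\|_*$); $\mathcal Z$ closed convex with norm $|\cdot|$; $\mathcal A$ linear; $h$ convex on $\mathcal Z$; $\mu\ge0$; $\nu$ $1$-strongly convex on $\mathcal X$ w.r.t. $\|\cdot\|$; $\tilde f$ convex differentiable with $\nabla\tilde f$ $\tilde L$-Lipschitz w.r.t. $\|\cdot\|$; $\tilde f^*$ its conjugate, $\mathcal Y=\mathrm{dom}\,\tilde f^*$; $\zeta$ $1$-strongly convex on $\mathcal Z$ w.r.t. $|\cdot|$. $U,V,W$ are the Bregman functions of $\zeta,\nu,\tilde f^*$: e.g. $W(v,y)=\tilde f^*(y)-\tilde f^*(v)-\langle(\tilde f^* )'(v),y-v\rangle$. Algorithm PDS-SPP: $x_0\in\mathcal X$, $y_0\in\mathcal Y$, $z_0\in\mathcal Z$, $\hat x_0=x_{-1}=x_0$; for $k=1,\dots,N$: $\tilde x_k=x_{k-1}+\lambda_k(\hat x_{k-1}-x_{k-2})$, $y_k=\arg\min_{y\in\mathcal Y}\langle-\tilde x_k,y\rangle+\tilde f^*(y)+\tau_kW(y_{k-1},y)$; $x_k^0=x_{k-1}$, $z_k^0=z_{k-1}$, $x_k^{-1}=x_{k-1}^{T_{k-1}-1}$ ($x_1^{-1}=x_0$); for $t=1,\dots,T_k$: $\tilde u_k^t=x_k^{t-1}+\alpha_k^t(x_k^{t-1}-x_k^{t-2})$, $z_k^t=\arg\min_{z\in\mathcal Z}h(z)+\langle-\mathcal A\tilde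 u_k^t,z\rangle+q_k^tU(z_k^{t-1},z)$, $x_k^t=\arg\min_{x\in\mathcal X}\mu\nu(x)+\langle y_k+\mathcal A^\top z_k^t,x\rangle+\eta_k^tV(x_k^{t-1},x)+p_kV(x_{k-1},x)$; $x_k=x_k^{T_k}$, $z_k=z_k^{T_k}$, $\hat x_k=\frac1{T_k}\sum_tx_k^t$, $\hat z_k=\frac1{T_k}\sum_tz_k^t$. Here $T_k$ are positive integers and $q_k^t,\eta_k^t$ positive reals. *)

From mathcomp Require Import all_boot all_algebra all_classical all_reals all_analysis.
Set Implicit Arguments. Unset Strict Implicit. Unset Printing Implicit Defensive.
Import GRing.Theory Num.Theory.
Local Open Scope ring_scope.
Local Open Scope classical_set_scope.

(* Finite-dimensional real space R^n, as row vectors (with the product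
   topology of analysis, hence the R^o). *)
Notation vec R n := 'rV[R^o]_n.

Section Defs.
Variable R : realType.

Definition dot n (u v : vec R n) : R := \sum_(i < n) u 0 i * v 0 i.

Definition is_norm n (nrm : vec R n -> R) : Prop :=
  [/\ forall x, 0 <= nrm x,
      forall x, nrm x = 0 -> x = 0,
      forall (a : R) x, nrm (a *: x) = `|a| * nrm x
    & forall x y, nrm (x + y) <= nrm x + nrm y].

Definition dual_norm n (nrm : vec R n -> R) (y : vec R n) : R :=
  sup [set dot y x | x in [set x | nrm x <= 1]].

Definition convex_on n (S : set (vec R n)) (f : vec R n -> R) : Prop :=
  forall x y (t : R), S x -> S y -> 0 <= t <= 1 ->
    f (t *: x + (1 - t) *: y) <= t * f x + (1 - t) * f y.

Definition strongly_convex1_on n (S : set (vec R n)) (nrm : vec R n -> R)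
    (f : vec R n -> R) : Prop :=
  forall x y (t : R), S x -> S y -> 0 <= t <= 1 ->
    f (t *: x + (1 - t) *: y)
      <= t * f x + (1 - t) * f y - t * (1 - t) / 2 * nrm (x - y) ^+ 2.

Definition subgrad_on n (S : set (vec R n)) (f : vec R n -> R) (x g : vec R n)
  : Prop := forall x', S x' -> f x + dot g (x' - x) <= f x'.

Definition bregman n (f : vec R n -> R) (v g y : vec R n) : R :=
  f y - f v - dot g (y - v).

Definition conjugate n (f : vec R n -> R) (y : vec R n) : \bar R :=
  ereal_sup [set (dot x y - f x)%:E | x in [set: vec R n]].

Definition conj_dom n (f : vec R n -> R) : set (vec R n) :=
  [set y | (conjugate f y < +oo)%E].

Definition conjr n (f : vec R n -> R) (y : vec R n) : R := fine (conjugate f y).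

Definition is_argmin n (S : set (vec R n)) (F : vec R n -> R) (x : vec R n)
  : Prop := S x /\ forall x', S x' -> F x <= F x'.

End Defs.

From mathcomp Require Import all_boot all_algebra all_classical all_reals all_analysis.
From mathcomp Require Import all_order ring lra zify.
Import Order.TTheory GRing.Theory Num.Theory numFieldNormedType.Exports.

Set Implicit Arguments.
Unset Strict Implicit.
Unset Printing Implicit Defensive.

Local Open Scope ring_scope.
Local Open Scope classical_set_scope.

(* The k-th bracket of the sum dominates the increment Phi_k - Phi_(k-1) of the potential
     Phi_k = - beta_k <d_k, y_k - y> + beta_k p_k / 2 ||d_k||^2 + beta_k (tau_k + 1) W(y_k, y),
   d_k = x_(k-1) - xhat_k, and Phi_N is the right-hand side.  Three facts produce this:
   - the y-step is a Bregman proximal step, so its objective gap at any y is exactly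
     (1 + tau_k) W(y_k, y);
   - Jensen's inequality and the 1-strong convexity of nu bound the average of the
     V(x_(k-1), x_k^t) below by ||d_k||^2 / 2;
   - a subgradient s of f~^* at v satisfies grad f~(s) = v, so the L-smoothness of f~ gives
     W(y_(k-1), y_k) >= <h, y_k - y_(k-1)> - L/2 ||h||^2 for every h; with h a multiple of
     d_(k-1), L lambda_k <= p_(k-1) tau_k and beta_(k-1) = beta_k lambda_k, this absorbs the
     cross term left by the extrapolation in x~_k.
   Finally beta_k tau_k <= beta_(k-1) (tau_(k-1) + 1) telescopes the W(., y) terms. *)

Section Dot.
Variables (R : realType) (n : nat).
Implicit Types u v w : vec R n.

Lemma dotC u v : dot u v = dot v u.
Proof. by apply: eq_bigr => i _; rewrite mulrC. Qed.

Lemma dotDl u v w : dot (u + v) w = dot u w + dot v w.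
Proof. by rewrite /dot -big_split; apply: eq_bigr => i _; rewrite mxE mulrDl. Qed.

Lemma dotZl (a : R) u v : dot (a *: u) v = a * dot u v.
Proof. by rewrite /dot mulr_sumr; apply: eq_bigr => i _; rewrite mxE mulrA. Qed.

Lemma dotNl u v : dot (- u) v = - dot u v.
Proof. by rewrite -scaleN1r dotZl mulN1r. Qed.

Lemma dotBl u v w : dot (u - v) w = dot u w - dot v w.
Proof. by rewrite dotDl dotNl. Qed.

Lemma dotDr u v w : dot u (v + w) = dot u v + dot u w.
Proof. by rewrite dotC dotDl !(dotC u). Qed.

Lemma dotZr (a : R) u v : dot u (a *: v) = a * dot u v.
Proof. by rewrite dotC dotZl dotC. Qed.

Lemma dotNr u v : dot u (- v) = - dot u v.
Proof. by rewrite !(dotC u) dotNl. Qed.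

Lemma dotBr u v w : dot u (v - w) = dot u v - dot u w.
Proof. by rewrite dotDr dotNr. Qed.

Lemma dot0r v : dot v 0 = 0.
Proof. by rewrite -(scale0r 0) dotZr mul0r. Qed.

Lemma dotvv_ge0 v : 0 <= dot v v.
Proof. by rewrite sumr_ge0 // => i _; rewrite -expr2 sqr_ge0. Qed.

Lemma dotvv_eq0 v : dot v v = 0 -> v = 0.
Proof.
move=> /eqP; rewrite /dot psumr_eq0 => [/allP vv0|i _]; last by rewrite -expr2 sqr_ge0.
apply/rowP => i; rewrite mxE.
by have /vv0 := mem_index_enum i; rewrite /= mulf_eq0 orbb => /eqP.
Qed.

Lemma mx_norm_ge_entry v i : `|v 0 i| <= `|v|.
Proof. by rewrite [`|v|]mx_normrE; apply/bigmax_geP; right; exists (0, i). Qed.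

Lemma dot_le_mx_norm u v : dot u v <= (\sum_i `|u 0 i|) * `|v|.
Proof.
rewrite /dot mulr_suml; apply: ler_sum => i _.
by rewrite (le_trans (ler_norm _)) // normrM ler_wpM2l // mx_norm_ge_entry.
Qed.

End Dot.

Lemma le0_of_le_mulr_small (R : realFieldType) (a b : R) :
  (forall t, 0 < t -> t <= 1 -> a <= b * t) -> a <= 0.
Proof.
move=> small; rewrite leNgt; apply/negP => a_gt0.
have b_ge0 := normr_ge0 b.
have d_gt0 : 0 < a + `|b| + 1 by lra.
pose t := a / (a + `|b| + 1).
have t_gt0 : 0 < t by rewrite divr_gt0.
have t_le1 : t <= 1 by rewrite ler_pdivrMr // mul1r; lra.
have : `|b| * t < a by rewrite /t mulrA ltr_pdivrMr //; nra.
have : b * t <= `|b| * t by apply: ler_wpM2r; [exact: ltW | exact: ler_norm].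
have := small t t_gt0 t_le1; lra.
Qed.

Lemma sqr_sum_le (R : realFieldType) (I : Type) (r : seq I) (a : I -> R) :
  (\sum_(i <- r) a i) ^+ 2 <= (size r)%:R * \sum_(i <- r) a i ^+ 2.
Proof.
elim: r => [|i r IH]; first by rewrite !big_nil expr0n mul0r.
rewrite !big_cons /= -natr1.
set S := \sum_(j <- r) a j in IH *; set Q := \sum_(j <- r) a j ^+ 2 in IH *.
set k : R := (size r)%:R in IH *.
have k_ge0 : 0 <= k by rewrite ler0n.
have Q_ge0 : 0 <= Q by apply: sumr_ge0 => j _; exact: sqr_ge0.
suff : 2 * a i * S <= k * a i ^+ 2 + Q by nra.
have [k0|k_neq0] := eqVneq k 0.
  have S0 : S = 0 by apply/eqP; rewrite -sqrf_eq0 eq_le sqr_ge0 andbT -(mul0r Q) -k0.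
  by rewrite S0 k0 mulr0 mul0r add0r.
have k_gt0 : 0 < k by rewrite lt_def k_neq0.
rewrite -(ler_pM2l k_gt0); have := sqr_ge0 (k * a i - S); nra.
Qed.

Lemma ler_sum_increments (R : numDomainType) (Phi b : nat -> R) (N : nat) :
  (0 < N)%N -> Phi 1%N <= b 1%N ->
  (forall k, (1 < k <= N)%N -> Phi k - Phi k.-1 <= b k) ->
  Phi N <= \sum_(1 <= k < N.+1) b k.
Proof.
elim: N => [//|[|N] IH] _ Phi1 incr; first by rewrite big_nat1.
rewrite big_nat_recr //= -(subrK (Phi N.+1) (Phi N.+2)) addrC.
apply: lerD; first by apply: incr; rewrite leqnn.
by apply: IH => // k /andP[k1 kN]; apply: incr; rewrite k1 ltnW.
Qed.

Lemma continuous_of_lipschitz (R : realType) (V : normedModType R) (f : V -> R) (M : R) :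
  0 <= M -> (forall a b, `|f a - f b| <= M * `|a - b|) -> continuous f.
Proof.
move=> M_ge0 f_lip a; apply/cvgrPdist_lt => e e_gt0.
have d_gt0 : 0 < e / (M + 1) by rewrite divr_gt0 // ltr_wpDl.
have near_a := @cvgr_dist_lt _ _ _ (nbhs a) _ id a (@cvg_id _ (nbhs a)) _ d_gt0.
near=> b.
have ab : `|a - b| < e / (M + 1) by near: b; exact: near_a.
apply: le_lt_trans (f_lip _ _) _.
apply: (@le_lt_trans _ _ (M * (e / (M + 1)))); first by rewrite ler_wpM2l // ltW.
by rewrite mulrA ltr_pdivrMr //; nra.
Unshelve. all: by end_near.
Qed.

Section Norm.
Variables (R : realType) (n : nat) (nx : vec R n -> R).
Hypothesis nx_norm : is_norm nx.
Implicit Types u v : vec R n.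

Lemma nx_ge0 v : 0 <= nx v. Proof. by case: nx_norm. Qed.
Lemma nx_eq0 v : nx v = 0 -> v = 0. Proof. by case: nx_norm => _ + _ _; apply. Qed.
Lemma nxZ (a : R) v : nx (a *: v) = `|a| * nx v. Proof. by case: nx_norm. Qed.
Lemma nxD u v : nx (u + v) <= nx u + nx v. Proof. by case: nx_norm. Qed.

Lemma nx0 : nx 0 = 0.
Proof. by rewrite -(scale0r 0) nxZ normr0 mul0r. Qed.

Lemma nxN v : nx (- v) = nx v.
Proof. by rewrite -scaleN1r nxZ normrN normr1 mul1r. Qed.

Lemma nx_sum (I : Type) (r : seq I) (P : pred I) (F : I -> vec R n) :
  nx (\sum_(i <- r | P i) F i) <= \sum_(i <- r | P i) nx (F i).
Proof.
elim/big_ind2: _ => [|a b c d ab cd|//]; first by rewrite nx0.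
exact: le_trans (nxD _ _) (lerD ab cd).
Qed.

Lemma nx_dist u v : `|nx u - nx v| <= nx (u - v).
Proof.
have triangle a b : nx a - nx b <= nx (a - b).
  by rewrite lerBlDr -{1}(subrK b a) nxD.
have := triangle v u; rewrite -(opprB u v) nxN ler_norml triangle andbT; lra.
Qed.

Lemma nx_le_mx_norm : exists2 M, 0 <= M & forall v, nx v <= M * `|v|.
Proof.
exists (\sum_j nx (delta_mx 0 j)) => [|v]; first by rewrite sumr_ge0 // => j _; exact: nx_ge0.
rewrite {1}(row_sum_delta v) mulr_suml (le_trans (nx_sum _ _ _)) //.
by apply: ler_sum => j _; rewrite nxZ mulrC ler_wpM2l ?nx_ge0 ?mx_norm_ge_entry.
Qed.

Lemma nx_continuous : continuous nx.
Proof.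
have [M M_ge0 nxM] := nx_le_mx_norm.
apply: (@continuous_of_lipschitz R 'rV[R^o]_n nx M M_ge0) => a b.
exact: le_trans (nx_dist _ _) (nxM _).
Qed.

(* [nx] attains a positive minimum on the compact unit sphere of the sup norm. *)
Lemma mx_norm_le_nx : exists2 c, 0 < c & forall v, c * `|v| <= nx v.
Proof.
pose S := [set v : vec R n | `|v| = 1].
have S_normalize v : v != 0 -> S (`|v|^-1 *: v).
  by move=> v0; rewrite /S /= normrZ normfV normr_id mulVf // normr_eq0.
have [[v0 Sv0]|S0] := pselect (S !=set0); last first.
  exists 1 => // v; have [->|v0] := eqVneq v 0; first by rewrite normr0 mulr0 nx0.
  by exfalso; apply: S0; exists (`|v|^-1 *: v); exact: S_normalize.
have S_compact : compact S.
  apply: bounded_closed_compact.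
    rewrite /= /bounded_near; near=> M => v /= ->.
    by near: M; apply: nbhs_pinfty_ge; rewrite num_real.
  have -> : S = (fun v : vec R n => `|v|) @^-1` [set x | x = 1] by [].
  by move: (@norm_continuous R^o 'rV[R^o]_n) => /continuous_closedP; apply; exact: closed_eq.
have [c /set_mem Sc c_min] :=
  compact_EVT_min (ex_intro _ v0 Sv0) S_compact (continuous_subspaceT nx_continuous).
exists (nx c) => [|v].
  rewrite lt_def nx_ge0 andbT; apply/eqP => /nx_eq0 c0.
  by move: Sc; rewrite /S /= c0 normr0 => /eqP; rewrite eq_sym oner_eq0.
have [->|v_neq0] := eqVneq v 0; first by rewrite normr0 mulr0 nx0.
have := c_min _ (mem_set (S_normalize v v_neq0)); rewrite nxZ normfV normr_id.
by rewrite ler_pdivlMl ?normr_gt0 // mulrC.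
Unshelve. all: by end_near.
Qed.

Lemma dot_le_dual_norm g v : dot g v <= dual_norm nx g * nx v.
Proof.
set E := [set dot g x | x in [set x | nx x <= 1]].
have [c c_gt0 c_nx] := mx_norm_le_nx.
have E_sup : has_sup E.
  split; first by exists (dot g 0), 0 => //=; rewrite nx0.
  exists ((\sum_i `|g 0 i|) / c) => _ [x /= x_le1 <-].
  apply: le_trans (dot_le_mx_norm _ _) _.
  apply: ler_wpM2l; first by apply: sumr_ge0 => i _.
  by rewrite -(ler_pM2l c_gt0) mulfV ?gt_eqF // (le_trans (c_nx x)).
have [->|v_neq0] := eqVneq v 0; first by rewrite dot0r nx0 mulr0.
have nxv_gt0 : 0 < nx v.
  by rewrite lt_def nx_ge0 andbT; apply: contra v_neq0 => /eqP/nx_eq0 ->.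
have -> : dot g v = nx v * dot g ((nx v)^-1 *: v).
  by rewrite dotZr mulrA mulfV ?gt_eqF // mul1r.
rewrite [_ * nx v]mulrC ler_wpM2l ?nx_ge0 //.
apply: (sup_upper_bound E_sup); exists ((nx v)^-1 *: v) => //=.
by rewrite nxZ ger0_norm ?invr_ge0 ?nx_ge0 // mulVf ?gt_eqF.
Qed.

Lemma sqr_nx_avg_le (T : nat) (F : nat -> vec R n) (x : vec R n) : (0 < T)%N ->
  nx (x - T%:R^-1 *: \sum_(1 <= t < T.+1) F t) ^+ 2
    <= T%:R^-1 * \sum_(1 <= t < T.+1) nx (F t - x) ^+ 2.
Proof.
move=> T_gt0; have T_pos : 0 < T%:R :> R by rewrite ltr0n.
have -> : x - T%:R^-1 *: \sum_(1 <= t < T.+1) F t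
    = T%:R^-1 *: \sum_(1 <= t < T.+1) (x - F t).
  rewrite sumrB sumr_const_nat subSS subn0 scalerBr -[x *+ T]scaler_nat scalerA.
  by rewrite mulVf ?scale1r ?gt_eqF.
rewrite nxZ ger0_norm ?invr_ge0 ?ler0n //.
set S := \sum_(1 <= t < T.+1) nx (F t - x).
have S_ge0 : 0 <= S by apply: sumr_ge0 => t _; exact: nx_ge0.
have triangle : nx (\sum_(1 <= t < T.+1) (x - F t)) <= S.
  apply: le_trans (nx_sum _ _ _) _; apply: ler_sum => t _.
  by rewrite -nxN opprB.
have := sqr_sum_le (index_iota 1 T.+1) (fun t => nx (F t - x)).
rewrite size_iota subSS subn0 -/S => cauchy_schwarz.
have -> : T%:R^-1 * \sum_(1 <= t < T.+1) nx (F t - x) ^+ 2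
    = T%:R^-1 ^+ 2 * (T%:R * \sum_(1 <= t < T.+1) nx (F t - x) ^+ 2).
  by rewrite expr2 !mulrA mulfVK ?gt_eqF.
rewrite exprMn; apply: ler_wpM2l; first exact: sqr_ge0.
apply: le_trans cauchy_schwarz.
by rewrite ler_sqr ?nnegrE ?nx_ge0.
Qed.

End Norm.

Lemma bregman_strongly_convex_ge (R : realType) (n : nat) (nx : vec R n -> R)
    (X : set (vec R n)) (nu : vec R n -> R) (dnu : vec R n -> vec R n) :
  convex_set X -> strongly_convex1_on X nx nu ->
  (forall v, X v -> subgrad_on X nu v (dnu v)) ->
  forall u v, X u -> X v -> 1 / 2 * nx (v - u) ^+ 2 <= bregman nu u (dnu u) v.
Proof.
move=> X_convex nu_sc nu_subgrad u v Xu Xv; rewrite -subr_le0.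
apply: (@le0_of_le_mulr_small _ _ (nx (v - u) ^+ 2 / 2)) => t t_gt0 t_le1.
have t01 : 0 <= t <= 1 by rewrite (ltW t_gt0) t_le1.
have sc := nu_sc v u t Xv Xu t01.
have X_segment : X (t *: v + (1 - t) *: u).
  have := X_convex _ _ (Itv01 (ltW t_gt0) t_le1) (mem_set Xv) (mem_set Xu).
  by rewrite inE.
have := nu_subgrad u Xu _ X_segment.
have -> : t *: v + (1 - t) *: u - u = t *: (v - u).
  by rewrite scalerBl scale1r scalerBr (addrC u) addrA addrK.
rewrite dotZr /bregman => sg.
by rewrite -(ler_pM2l t_gt0); nra.
Qed.

Lemma derive_quadratic_upper (R : realType) (g dg : R -> R) (L : R) :
  (forall t : R, is_derive t (1 : R) g (dg t)) ->
  (forall t, 0 < t < 1 -> dg t <= dg 0 + L * t) ->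
  g 1 <= g 0 + dg 0 + L / 2.
Proof.
move=> g_dg dg_le.
pose phi t := g t - (t * dg 0 + t ^+ 2 * (L / 2)).
have phi_dphi (t : R) : is_derive t (1 : R) phi (dg t - (dg 0 + t * L)).
  have -> : phi = g - ((@id R^o) * cst (dg 0) + (@id R^o) ^+ 2 * cst (L / 2)).
    by apply/funext.
  apply: is_derive_eq.
  rewrite !scaler0 !add0r /= -![_%:A]/(_ * 1) -![_ *: _]/(_ * _) !mulr1 expr1.
  by rewrite mulrA divfK ?pnatr_eq0 // [L * t]mulrC.
have : phi 1 <= phi 0.
  apply: (@ler0_derive1_le_cc _ phi 0 1); rewrite ?in_itv /= ?ler01 ?lexx //.
  - move=> t; rewrite in_itv /= => t01.
    by rewrite derive1E (@derive_val _ _ _ _ _ _ _ (phi_dphi t)) subr_le0 mulrC dg_le.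
  - apply: continuous_subspaceT => t; apply: differentiable_continuous.
    by apply/derivable1_diffP; exact: (@ex_derive _ _ _ _ _ _ _ (phi_dphi t)).
by rewrite /phi expr1n expr0n /= !mul1r !mul0r addr0 subr0; lra.
Qed.

Section Conjugate.
Variables (R : realType) (n : nat) (f : vec R n -> R).

Lemma conjugate_fin y : conj_dom f y -> conjugate f y = (conjr f y)%:E.
Proof.
move=> y_dom; rewrite /conjr fineK // fin_numE (lt_eqF y_dom) andbT.
have : ((dot 0 y - f 0)%:E <= conjugate f y)%E by apply: ereal_sup_ubound; exists 0.
by apply: contraTneq => ->.
Qed.

Lemma fenchel_young x y : conj_dom f y -> dot x y - f x <= conjr f y.
Proof.
move=> y_dom; rewrite -lee_fin -conjugate_fin //.
by apply: ereal_sup_ubound; exists x.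
Qed.

Lemma conjr_le y c : (forall x, dot x y - f x <= c) -> conj_dom f y /\ conjr f y <= c.
Proof.
move=> le_c; have conj_le : (conjugate f y <= c%:E)%E.
  by apply: ge_ereal_sup => _ [x _ <-]; rewrite lee_fin.
have y_dom : conj_dom f y by rewrite /conj_dom /= (le_lt_trans conj_le) ?ltry.
by split; rewrite // -lee_fin -conjugate_fin.
Qed.

End Conjugate.

Section Smooth.
Variables (R : realType) (n : nat) (nx : vec R n -> R) (f : vec R n -> R^o)
  (gf : vec R n -> vec R n) (L : R).
Hypothesis nx_norm : is_norm nx.
Hypothesis f_diff : forall v, differentiable f v /\ forall d, 'd f v d = dot (gf v) d.
Hypothesis gf_lip : forall v v', dual_norm nx (gf v - gf v') <= L * nx (v - v').

Lemma is_derive_along s h (t : R) :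
  is_derive t (1 : R) (fun t : R => f (s + t *: h)) (dot (gf (s + t *: h)) h).
Proof.
have quotE : (fun e : R => e^-1 *: (f (s + (e *: 1 + t) *: h) - f (s + t *: h)))
    = (fun e : R => e^-1 *: (f (e *: h + (s + t *: h)) - f (s + t *: h))).
  apply/funext => e /=; congr (_ *: (f _ - _)).
  by rewrite -[e%:A]/(e * 1) mulr1 scalerDl addrCA.
have derivable_along : derivable (fun t : R => f (s + t *: h)) t 1.
  by rewrite /derivable quotE; exact: diff_derivable (f_diff _).1.
apply: DeriveDef => //.
have -> : 'D_1 (fun t : R => f (s + t *: h)) t = 'D_h f (s + t *: h) by rewrite /derive quotE.
by rewrite deriveE ?(f_diff _).2 //; exact: (f_diff _).1.
Qed.

Lemma grad_increment_le s h (t : R) : 0 <= t ->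
  `|dot (gf (s + t *: h) - gf s) h| <= L * nx h ^+ 2 * t.
Proof.
move=> t_ge0; have nxh_ge0 := nx_ge0 nx_norm h.
have lip := gf_lip (s + t *: h) s.
rewrite addrAC subrr add0r (nxZ nx_norm) ger0_norm // in lip.
have up := dot_le_dual_norm nx_norm (gf (s + t *: h) - gf s) h.
have lo := dot_le_dual_norm nx_norm (gf (s + t *: h) - gf s) (- h).
rewrite (nxN nx_norm) dotNr in lo.
rewrite ler_norml; apply/andP; split; nra.
Qed.

Lemma smooth_quadratic_bound s h :
  `|f (s + h) - f s - dot (gf s) h| <= L / 2 * nx h ^+ 2.
Proof.
pose g t := f (s + t *: h); pose dg t := dot (gf (s + t *: h)) h.
have g_dg (t : R) : is_derive t (1 : R) g (dg t) := is_derive_along s h t.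
have dg_near t : 0 < t < 1 -> - (L * nx h ^+ 2 * t) <= dg t - dg 0 <= L * nx h ^+ 2 * t.
  move=> /andP[t_gt0 _]; rewrite -ler_norml /dg -dotBl scale0r addr0.
  exact: grad_increment_le (ltW t_gt0).
have upper := derive_quadratic_upper g_dg.
have lower := derive_quadratic_upper (fun t => is_deriveN (g_dg t)).
have [g0 g1 dg0] : [/\ g 0 = f s, g 1 = f (s + h) & dg 0 = dot (gf s) h].
  by rewrite /g /dg scale0r scale1r addr0.
rewrite ler_norml; apply/andP; split.
- suff : - g 1 <= - g 0 + - dg 0 + L * nx h ^+ 2 / 2 by rewrite g0 g1 dg0; lra.
  by apply: lower => t /dg_near; lra.
- suff : g 1 <= g 0 + dg 0 + L * nx h ^+ 2 / 2 by rewrite g0 g1 dg0; lra.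
  by apply: upper => t /dg_near; lra.
Qed.

Hypothesis f_convex : convex_on setT f.

Lemma convex_grad_le s x : f s + dot (gf s) (x - s) <= f x.
Proof.
rewrite -subr_ge0 -oppr_le0.
apply: (@le0_of_le_mulr_small _ _ (L / 2 * nx (x - s) ^+ 2)) => t t_gt0 t_le1.
have segmentE : t *: x + (1 - t) *: s = s + t *: (x - s).
  by rewrite scalerBl scale1r scalerBr addrCA.
have conv : f (s + t *: (x - s)) <= t * f x + (1 - t) * f s.
  by rewrite -segmentE; apply: f_convex; rewrite // (ltW t_gt0) t_le1.
have := smooth_quadratic_bound s (t *: (x - s)); rewrite ler_norml => /andP[+ _].
rewrite (nxZ nx_norm) (ger0_norm (ltW t_gt0)) dotZr => lower.
rewrite -(ler_pM2l t_gt0); nra.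
Qed.

Lemma conjr_grad s : conj_dom f (gf s) /\ conjr f (gf s) = dot s (gf s) - f s.
Proof.
have max_at_s x : dot x (gf s) - f x <= dot s (gf s) - f s.
  by have := convex_grad_le s x; rewrite dotBr !(dotC (gf s)); lra.
have [s_dom conj_le] := conjr_le max_at_s.
by split=> //; apply/eqP; rewrite eq_le conj_le fenchel_young.
Qed.

Lemma conj_subgrad_grad v s : conj_dom f v ->
  subgrad_on (conj_dom f) (conjr f) v s -> conjr f v = dot s v - f s /\ gf s = v.
Proof.
move=> v_dom s_subgrad; have [gs_dom conj_gs] := conjr_grad s.
have conj_v : conjr f v = dot s v - f s.
  apply/eqP; rewrite eq_le fenchel_young // andbT.
  by have := s_subgrad _ gs_dom; rewrite conj_gs dotBr; lra.
split=> //; set g := gf s.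
have dir_le0 h : dot h (v - g) <= 0.
  apply: (@le0_of_le_mulr_small _ _ (L / 2 * nx h ^+ 2)) => t t_gt0 _.
  have fy := fenchel_young (s + t *: h) v_dom.
  have := smooth_quadratic_bound s (t *: h); rewrite ler_norml => /andP[_ upper].
  rewrite (nxZ nx_norm) (ger0_norm (ltW t_gt0)) dotZr in upper.
  rewrite conj_v dotDl dotZl in fy.
  rewrite dotBr (dotC h g) -(ler_pM2l t_gt0); nra.
apply/eqP; rewrite eq_sym -subr_eq0; apply/eqP/dotvv_eq0/eqP.
by rewrite eq_le dir_le0 dotvv_ge0.
Qed.

Lemma bregman_conj_ge v s v' h : conj_dom f v -> subgrad_on (conj_dom f) (conjr f) v s ->
  conj_dom f v' -> dot h (v' - v) - L / 2 * nx h ^+ 2 <= bregman (conjr f) v s v'.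
Proof.
move=> v_dom s_subgrad v'_dom; have [conj_v gs] := conj_subgrad_grad v_dom s_subgrad.
have fy := fenchel_young (s + h) v'_dom.
have := smooth_quadratic_bound s h; rewrite ler_norml => /andP[_ upper].
rewrite /bregman conj_v !dotBr dotDl in fy *.
by rewrite gs (dotC v h) in upper; lra.
Qed.

End Smooth.

Section ProxStep.
Variables (R : realType) (n : nat) (F : vec R n -> R) (a v0 s0 : vec R n) (tau : R).
Hypothesis tau_ge0 : 0 <= tau.

Lemma prox_gap_bregman v1 v :
  (- dot a v + F v + tau * bregman F v0 s0 v)
    - (- dot a v1 + F v1 + tau * bregman F v0 s0 v1)
  = (1 + tau) * bregman F v1 ((1 + tau)^-1 *: (a + tau *: s0)) v.
Proof.
have tau1_neq0 : 1 + tau != 0 by rewrite lt0r_neq0 // ltr_pwDl.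
by rewrite /bregman dotZl dotDl dotZl !dotBr; field.
Qed.

Lemma prox_argmin_subgrad (S : set (vec R n)) v1 :
  is_argmin S (fun v => - dot a v + F v + tau * bregman F v0 s0 v) v1 ->
  S v1 /\ subgrad_on S F v1 ((1 + tau)^-1 *: (a + tau *: s0)).
Proof.
move=> [Sv1 v1_min]; split=> // v Sv.
have := prox_gap_bregman v1 v; have := v1_min v Sv.
rewrite -subr_ge0 => + gapE; rewrite gapE pmulr_rge0 ?ltr_pwDl // /bregman.
by rewrite subr_ge0 lerBrDl addrC.
Qed.

End ProxStep.

Lemma coupling_ge0 (R : realFieldType) (l tau L p D W N : R) :
  0 < l -> 0 <= tau -> 0 <= p -> 0 <= N -> L * l <= p * tau ->
  (forall c, c * D - L / 2 * (c ^+ 2 * N) <= W) ->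
  0 <= l * D + tau * W + l * p / 2 * N.
Proof.
move=> l_gt0 tau_ge0 p_ge0 N_ge0 Ll W_ge.
have lpN_ge0 : 0 <= l * p / 2 * N by rewrite !mulr_ge0 ?invr_ge0 ?ler0n // ltW.
(* Take [c = - l / tau]; when [tau = 0], [W] dominates every [c * D], forcing [D = 0]. *)
have [tau0|tau_neq0] := eqVneq tau 0.
  have L_le0 : L <= 0 by move: Ll; rewrite tau0 mulr0 pmulr_lle0.
  suff -> : D = 0 by rewrite tau0 mulr0 !mul0r !add0r.
  apply/eqP; apply: contraT => D_neq0; rewrite -(ltxx W).
  pose c := (`|W| + 1) / D; have cD : c * D = `|W| + 1 by rewrite divfK.
  have quad_le0 : L / 2 * (c ^+ 2 * N) <= 0.
    by apply: mulr_le0_ge0; [lra | rewrite mulr_ge0 ?sqr_ge0].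
  by have := W_ge c; have := ler_norm W; rewrite cD; lra.
have tau_gt0 : 0 < tau by rewrite lt_def tau_neq0.
pose c := l / tau; have lE : l = c * tau by rewrite /c divfK.
have c_ge0 : 0 <= c by rewrite divr_ge0 ?ltW.
have Lc : L * c <= p by rewrite -(ler_pM2r tau_gt0) -mulrA -lE.
have W_at_c := W_ge (- c); rewrite sqrrN in W_at_c.
have quad_le : L / 2 * (c ^+ 2 * N) <= c * p / 2 * N.
  by have := ler_wpM2r (mulr_ge0 c_ge0 N_ge0) Lc; nra.
rewrite lE; nra.
Qed.

Section PDS.
Variables (R : realType) (n : nat) (nx : vec R n -> R) (X : set (vec R n))
  (nu : vec R n -> R) (dnu : vec R n -> vec R n)
  (ft : vec R n -> R^o) (gf : vec R n -> vec R n) (Lt : R).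
Hypothesis nx_norm : is_norm nx.
Hypothesis X_convex : convex_set X.
Hypothesis nu_sc : strongly_convex1_on X nx nu.
Hypothesis nu_subgrad : forall v, X v -> subgrad_on X nu v (dnu v).
Hypothesis ft_convex : convex_on setT ft.
Hypothesis ft_diff : forall v, differentiable ft v /\ forall d, 'd ft v d = dot (gf v) d.
Hypothesis gf_lip : forall v v', dual_norm nx (gf v - gf v') <= Lt * nx (v - v').

Variables (N : nat) (lam tau beta p : nat -> R) (T : nat -> nat)
  (x xh xt y s : nat -> vec R n) (xi : nat -> nat -> vec R n).
Hypothesis tau_ge0 : forall k, 0 <= tau k.
Hypothesis beta_gt0 : forall k, 0 < beta k.
Hypothesis p_gt0 : forall k, 0 < p k.
Hypothesis T_gt0 : forall k, (0 < T k)%N.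
Hypothesis tau1 : tau 1%N = 0.
Hypothesis beta_tau : forall k, (2 <= k)%N -> beta k * tau k <= beta k.-1 * (tau k.-1 + 1).
Hypothesis beta_lam : forall k, (2 <= k)%N -> beta k.-1 = beta k * lam k.
Hypothesis Lt_lam : forall k, (2 <= k)%N -> Lt * lam k <= p k.-1 * tau k.
Hypothesis N_gt0 : (0 < N)%N.
Hypothesis X_x0 : X (x 0%N).
Hypothesis dom_y0 : conj_dom ft (y 0%N).
Hypothesis xh0 : xh 0%N = x 0%N.
Hypothesis s0_subgrad : subgrad_on (conj_dom ft) (conjr ft) (y 0%N) (s 0%N).
Hypothesis xtE : forall k, (1 <= k <= N)%N ->
  xt k = x k.-1 + lam k *: (xh k.-1 - x (k - 2)%N).
Hypothesis y_argmin : forall k, (1 <= k <= N)%N ->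
  is_argmin (conj_dom ft)
    (fun v => - dot (xt k) v + conjr ft v + tau k * bregman (conjr ft) (y k.-1) (s k.-1) v)
    (y k).
Hypothesis sE : forall k, (1 <= k <= N)%N ->
  s k = (1 + tau k)^-1 *: (xt k + tau k *: s k.-1).
Hypothesis X_xi : forall k t, (1 <= k <= N)%N -> (1 <= t <= T k)%N -> X (xi k t).
Hypothesis xE : forall k, (1 <= k <= N)%N -> x k = xi k (T k).
Hypothesis xhE : forall k, (1 <= k <= N)%N ->
  xh k = (T k)%:R^-1 *: \sum_(1 <= t < (T k).+1) xi k t.
Variables (u w : vec R n).
Hypothesis dom_w : conj_dom ft w.

Local Notation W k := (bregman (conjr ft) (y k) (s k)).
Local Notation d k := (x k.-1 - xh k).
Local Notation gap k := (- dot (xh k) w + dot u (y k) + dot (y k) (xh k - u)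
  - conjr ft (y k) + conjr ft w
  + p k / (T k)%:R * \sum_(1 <= t < (T k).+1) bregman nu (x k.-1) (dnu (x k.-1)) (xi k t)).
Local Notation Phi k := (- beta k * dot (d k) (y k - w) + beta k * p k / 2 * nx (d k) ^+ 2
  + beta k * (tau k + 1) * W k w).

Lemma y_dom_subgrad j : (j <= N)%N ->
  conj_dom ft (y j) /\ subgrad_on (conj_dom ft) (conjr ft) (y j) (s j).
Proof.
case: j => [//|j] j_lt; have j_range : (1 <= j.+1 <= N)%N by [].
by rewrite sE //; exact: (prox_argmin_subgrad (tau_ge0 j.+1) (y_argmin j_range)).
Qed.

Lemma W_ge0 j : (j <= N)%N -> 0 <= W j w.
Proof. by move=> /y_dom_subgrad[_ /(_ w dom_w)]; rewrite /bregman; lra. Qed.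

Lemma x_in_X k : (k < N)%N -> X (x k).
Proof.
case: k => [//|k] k_lt; have k_range : (0 < k.+1 <= N)%N by rewrite (ltnW k_lt).
by rewrite xE //; apply: X_xi; rewrite // T_gt0 leqnn.
Qed.

Lemma avg_bregman_ge k : (1 <= k <= N)%N ->
  p k / 2 * nx (d k) ^+ 2
    <= p k / (T k)%:R * \sum_(1 <= t < (T k).+1) bregman nu (x k.-1) (dnu (x k.-1)) (xi k t).
Proof.
move=> k_range; have X_prev : X (x k.-1) by apply: x_in_X; lia.
have jensen := sqr_nx_avg_le nx_norm (xi k) (x k.-1) (T_gt0 k); rewrite -xhE // in jensen.
have sc : \sum_(1 <= t < (T k).+1) (1 / 2 * nx (xi k t - x k.-1) ^+ 2)
    <= \sum_(1 <= t < (T k).+1) bregman nu (x k.-1) (dnu (x k.-1)) (xi k t).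
  apply: ler_sum_nat => t t_range.
  by apply: bregman_strongly_convex_ge X_prev (X_xi k_range t_range).
rewrite -mulr_sumr in sc.
have pk_ge0 : 0 <= p k / 2 by rewrite divr_ge0 ?ler0n ?ltW.
apply: le_trans (ler_wpM2l pk_ge0 jensen) _.
set Q := \sum_(1 <= t < (T k).+1) nx (xi k t - x k.-1) ^+ 2.
have -> : p k / 2 * ((T k)%:R^-1 * Q) = p k / (T k)%:R * (1 / 2 * Q) by ring.
by apply: ler_wpM2l sc; rewrite divr_ge0 ?ler0n ?ltW.
Qed.

Lemma gap_ge k : (1 <= k <= N)%N ->
  dot (xh k - xt k) (y k - w) + tau k * W k.-1 (y k) + (tau k + 1) * W k w
    - tau k * W k.-1 w + p k / 2 * nx (d k) ^+ 2 <= gap k.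
Proof.
move=> k_range.
have := prox_gap_bregman (conjr ft) (xt k) (y k.-1) (s k.-1) (tau_ge0 k) (y k) w.
rewrite -sE // => prox_gap.
have := avg_bregman_ge k_range.
rewrite !dotBl !dotBr (dotC (y k) (xh k)) (dotC (y k) u); lra.
Qed.

Lemma potential1_le : Phi 1%N <= beta 1%N * gap 1%N.
Proof.
have one_range : (1 <= 1 <= N)%N by [].
have := ler_wpM2l (ltW (beta_gt0 1)) (gap_ge one_range).
rewrite xtE // (_ : (1 - 2)%N = 0%N) // xh0 subrr scaler0 addr0 tau1 !dotBl !dotBr.
lra.
Qed.

Lemma potential_increment_le k : (1 < k <= N)%N -> Phi k - Phi k.-1 <= beta k * gap k.
Proof.
case: k => [//|j] /andP[j_gt0 j_lt] /=.
have [j_range j1_range] : (1 <= j <= N)%N /\ (1 <= j.+1 <= N)%N by split; lia.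
have [dom_j sg_j] := y_dom_subgrad (ltnW j_lt).
have [dom_j1 _] := y_dom_subgrad j_lt.
have W_step c : c * dot (d j) (y j.+1 - y j) - Lt / 2 * (c ^+ 2 * nx (d j) ^+ 2)
    <= W j (y j.+1).
  have := bregman_conj_ge nx_norm ft_diff gf_lip ft_convex (c *: d j) dom_j sg_j dom_j1.
  by rewrite dotZl (nxZ nx_norm) exprMn real_normK ?num_real.
have betaE := beta_lam j_gt0; rewrite /= in betaE.
have lam_gt0 : 0 < lam j.+1.
  by have := beta_gt0 j; rewrite betaE pmulr_rgt0.
have coupling := coupling_ge0 lam_gt0 (tau_ge0 _) (ltW (p_gt0 j)) (sqr_ge0 (nx (d j)))
  (Lt_lam j_gt0) W_step.
have weighted_coupling := mulr_ge0 (ltW (beta_gt0 j.+1)) coupling.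
have W_coef_ge0 : 0 <= beta j * (tau j + 1) - beta j.+1 * tau j.+1.
  by rewrite subr_ge0; exact: beta_tau.
have W_drop := mulr_ge0 W_coef_ge0 (W_ge0 (ltnW j_lt)).
have step := ler_wpM2l (ltW (beta_gt0 j.+1)) (gap_ge j1_range).
rewrite xtE //= (_ : (j.+1 - 2)%N = j.-1) in step; last by lia.
rewrite betaE !dotBl !dotBr !dotDl !dotZl !dotBl in weighted_coupling W_drop step *; lra.
Qed.

Lemma potential_le_sum : Phi N <= \sum_(1 <= k < N.+1) beta k * gap k.
Proof.
exact: (@ler_sum_increments _ (fun k => Phi k) (fun k => beta k * gap k) N N_gt0
  potential1_le potential_increment_le).
Qed.

End PDS.

Theorem lemma5p2 (R : realType) (n m : nat)
  (nx : vec R n -> R) (nz : vec R m -> R)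
  (X : set (vec R n)) (Z : set (vec R m))
  (A : 'M[R^o]_(n, m)) (h : vec R m -> R) (mu : R)
  (nu : vec R n -> R) (dnu : vec R n -> vec R n)
  (zeta : vec R m -> R) (dzeta : vec R m -> vec R m)
  (ft : vec R n -> R^o) (gf : vec R n -> vec R n) (Lt : R)
  (N : nat) (lam tau beta p : nat -> R) (T : nat -> nat)
  (q eta alpha : nat -> nat -> R)
  (x xh xt y s : nat -> vec R n) (z zh : nat -> vec R m)
  (xi ut : nat -> nat -> vec R n) (zi : nat -> nat -> vec R m) :
  (* the spaces, norms and functions *)
  is_norm nx -> is_norm nz ->
  closed X -> convex_set X -> closed Z -> convex_set Z ->
  convex_on Z h -> 0 <= mu ->
  strongly_convex1_on X nx nu -> (forall v, X v -> subgrad_on X nu v (dnu v)) ->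
  strongly_convex1_on Z nz zeta ->
  (forall v, Z v -> subgrad_on Z zeta v (dzeta v)) ->
  convex_on setT ft ->
  (forall v, differentiable ft v /\ forall d, 'd ft v d = dot (gf v) d) ->
  (forall v v', dual_norm nx (gf v - gf v') <= Lt * nx (v - v')) ->
  (* parameters *)
  (forall k, 0 <= lam k) -> (forall k, 0 <= tau k) ->
  (forall k, 0 < beta k) -> (forall k, 0 < p k) ->
  (forall k, 0 < T k)%N ->
  (forall k t, 0 < q k t) -> (forall k t, 0 < eta k t) ->
  tau 1%N = 0 ->
  (forall k, (2 <= k)%N -> beta k * tau k <= beta k.-1 * (tau k.-1 + 1)) ->
  (forall k, (2 <= k)%N -> beta k.-1 = beta k * lam k) ->
  (forall k, (2 <= k)%N -> Lt * lam k <= p k.-1 * tau k) ->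
  (1 <= N)%N ->
  (* initialization *)
  X (x 0%N) -> conj_dom ft (y 0%N) -> Z (z 0%N) -> xh 0%N = x 0%N ->
  subgrad_on (conj_dom ft) (conjr ft) (y 0%N) (s 0%N) ->
  (* outer iteration k = 1..N *)
  (forall k, (1 <= k <= N)%N ->
     xt k = x k.-1 + lam k *: (xh k.-1 - x (k - 2)%N)) ->
  (forall k, (1 <= k <= N)%N ->
     is_argmin (conj_dom ft)
       (fun v => - dot (xt k) v + conjr ft v
                 + tau k * bregman (conjr ft) (y k.-1) (s k.-1) v) (y k)) ->
  (* The subgradient of f~^* at y_k: the one given by the optimality condition of the
     y-step, used in W(y_k, .) *)
  (forall k, (1 <= k <= N)%N ->
     s k = (1 + tau k)^-1 *: (xt k + tau k *: s k.-1)) ->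
  (forall k, (1 <= k <= N)%N -> xi k 0%N = x k.-1 /\ zi k 0%N = z k.-1) ->
  (forall k, (1 <= k <= N)%N ->
     ut k 1%N = xi k 0%N + alpha k 1%N *:
       (xi k 0%N - (if k == 1%N then x 0%N else xi k.-1 (T k.-1).-1))) ->
  (forall k t, (1 <= k <= N)%N -> (2 <= t <= T k)%N ->
     ut k t = xi k t.-1 + alpha k t *: (xi k t.-1 - xi k (t - 2)%N)) ->
  (forall k t, (1 <= k <= N)%N -> (1 <= t <= T k)%N ->
     is_argmin Z
       (fun w => h w - dot (ut k t *m A) w
                 + q k t * bregman zeta (zi k t.-1) (dzeta (zi k t.-1)) w)
       (zi k t)) ->
  (forall k t, (1 <= k <= N)%N -> (1 <= t <= T k)%N ->
     is_argmin X
       (fun v => mu * nu v + dot (y k + zi k t *m A^T) v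
                 + eta k t * bregman nu (xi k t.-1) (dnu (xi k t.-1)) v
                 + p k * bregman nu (x k.-1) (dnu (x k.-1)) v)
       (xi k t)) ->
  (forall k, (1 <= k <= N)%N ->
     [/\ x k = xi k (T k), z k = zi k (T k),
         xh k = (T k)%:R^-1 *: \sum_(1 <= t < (T k).+1) xi k t
       & zh k = (T k)%:R^-1 *: \sum_(1 <= t < (T k).+1) zi k t]) ->
  (* conclusion *)
  forall (u w : vec R n), X u -> conj_dom ft w ->
    \sum_(1 <= k < N.+1) beta k *
      ( - dot (xh k) w + dot u (y k) + dot (y k) (xh k - u)
        - conjr ft (y k) + conjr ft w
        + p k / (T k)%:R *
            \sum_(1 <= t < (T k).+1) bregman nu (x k.-1) (dnu (x k.-1)) (xi k t))
    >= - beta N * dot (x N.-1 - xh N) (y N - w)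
       + beta N * p N / 2 * nx (x N.-1 - xh N) ^+ 2
       + beta N * (tau N + 1) * bregman (conjr ft) (y N) (s N) w.
Proof.
move=> nx_norm _ _ X_convex _ _ _ _ nu_sc nu_subgrad _ _ ft_convex ft_diff gf_lip _ tau_ge0
  beta_gt0 p_gt0 T_gt0 _ _ tau1 beta_tau beta_lam Lt_lam N_gt0 X_x0 dom_y0 _ xh0 s0_subgrad
  xtE y_argmin sE _ _ _ _ x_argmin x_final u w _ dom_w.
have X_xi k t : (1 <= k <= N)%N -> (1 <= t <= T k)%N -> X (xi k t).
  by move=> k_range /(x_argmin k t k_range)[].
have xE k : (1 <= k <= N)%N -> x k = xi k (T k) by move=> /x_final[].
have xhE k : (1 <= k <= N)%N -> xh k = (T k)%:R^-1 *: \sum_(1 <= t < (T k).+1) xi k t.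
  by move=> /x_final[].
exact: (potential_le_sum nx_norm X_convex nu_sc nu_subgrad ft_convex ft_diff gf_lip
  tau_ge0 beta_gt0 p_gt0 T_gt0 tau1 beta_tau beta_lam Lt_lam N_gt0 X_x0 dom_y0 xh0
  s0_subgrad xtE y_argmin sE X_xi xE xhE u dom_w).
Qed.
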